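(* Let $n\ge 2$, $T=n$, $I=J=\{1,\dots,n\}$, and $E=\{(i,1):i\in I\}\cup\{(j,j):j=2,\dots,n\}$. Then the clairvoyant optimum of IFM on this instance is at least $1-1/e$, while under RANKING the offline agent $1$ satisfies $\mathbb E[Z_1]=O(1/n)$. Hence RANKING has competitive ratio $0$ for IFM.
   Context: Model. An instance consists of a finite bipartite graph $(I,J,E)$, where $I$ is the set of offline agents and $J$ the set of online agent types, with $|J|=T$. For $j\in J$ let $\mathcal N_j=\{i\in I:(i,j)\in E\}$. There are $T$ rounds $t=1,\dots,T$; in each round exactly one online agent arrives, whose type is drawn uniformly at random from $J$ (each type with probability $1/T$), independently across rounds. Each offline agent can be matched at most once. When an online agent of type $j$ arrives, an online algorithm must immediately and irrevocably either reject it or match it to a currently unmatched $i\in\mathcal N_j$. Let $Z_i$ be the indicator that offline agent $i$ is matched by the end. IFM maximizes $\min_{i\in I}\mathbb E[Z_i]$. A clairvoyant policy observes the entire arrival sequence before choosing (possibly randomly) which arrivals to match to which compatible unmatched offline agents; the clairvoyant optimum is the supremum of $\min_i\mathbb E[Z_i]$ over clairvoyant policies. RANKING: before the online phase draw a uniformly random permutation $\pi$ of $I$; when an online agent of type $j$ arrives, match it to the currently unmatched neighbor of $j$ that comes earliest in $\pi$, or reject if none exists. *)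

From HB Require Import structures.
From mathcomp Require Import all_boot all_order all_fingroup all_algebra.
From mathcomp Require Import all_classical all_reals all_analysis.
Set Implicit Arguments. Unset Strict Implicit. Unset Printing Implicit Defensive.
Import Order.TTheory GRing.Theory Num.Theory.
Local Open Scope ring_scope.

(* An IFM instance: offline agents I = 'I_ni, online types J = 'I_nJ,
   edges given by adj j i (type j compatible with offline agent i),
   T rounds.  An arrival sequence is s : {ffun 'I_T -> 'I_nJ}
   (s t = type arriving in round t), uniformly distributed:
   each round's type is uniform on J, independently. *)

Definition seq_prob (R : realType) (nJ T : nat) : R := (nJ%:R)^-1 ^+ T.

(* A clairvoyant outcome: an assignment of rounds to offline agents
   (None = reject). *)
Definition feasible_assignment (ni nJ T : nat) (adj : 'I_nJ -> 'I_ni -> bool)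
    (s : {ffun 'I_T -> 'I_nJ}) (m : {ffun 'I_T -> option 'I_ni}) : Prop :=
  (forall t i, m t = Some i -> adj (s t) i) /\
  (forall t t' i, m t = Some i -> m t' = Some i -> t = t').

Definition matchedZ (R : realType) (ni T : nat)
    (m : {ffun 'I_T -> option 'I_ni}) (i : 'I_ni) : R :=
  if [exists t, m t == Some i] then 1 else 0.

Definition clair_policy (R : realType) (ni nJ T : nat) (adj : 'I_nJ -> 'I_ni -> bool)
    (pol : {ffun 'I_T -> 'I_nJ} -> {ffun 'I_T -> option 'I_ni} -> R) : Prop :=
  forall s, (forall m, 0 <= pol s m) /\
            \sum_(m : {ffun 'I_T -> option 'I_ni}) pol s m = 1 /\
            (forall m, pol s m != 0 -> feasible_assignment adj s m).

Definition clairEZ (R : realType) (ni nJ T : nat)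
    (pol : {ffun 'I_T -> 'I_nJ} -> {ffun 'I_T -> option 'I_ni} -> R) (i : 'I_ni) : R :=
  \sum_(s : {ffun 'I_T -> 'I_nJ})
     seq_prob R nJ T * \sum_(m : {ffun 'I_T -> option 'I_ni}) pol s m * matchedZ R m i.

(* min over offline agents (the default 1 is irrelevant for ni > 0, and
   all the E[Z_i] are <= 1 anyway) *)
Definition min_over (R : realType) (ni : nat) (f : 'I_ni -> R) : R :=
  \big[Order.min/1]_(i : 'I_ni) f i.

Definition clair_opt (R : realType) (ni nJ T : nat) (adj : 'I_nJ -> 'I_ni -> bool) : R :=
  sup [set x : R | exists pol : {ffun 'I_T -> 'I_nJ} -> {ffun 'I_T -> option 'I_ni} -> R,
                               clair_policy adj pol /\
                               x = min_over (clairEZ pol)].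

(* RANKING. A permutation pi : {perm 'I_ni} lists the offline agents:
   pi k is the agent at position k.  Agent i is "earlier" than i' iff it
   occurs at a smaller position. *)
Definition rank_cand (ni nJ : nat) (adj : 'I_nJ -> 'I_ni -> bool)
    (M : {set 'I_ni}) (j : 'I_nJ) (i : 'I_ni) : bool :=
  adj j i && (i \notin M).

Definition rank_choice (ni nJ : nat) (adj : 'I_nJ -> 'I_ni -> bool)
    (pi : {perm 'I_ni}) (M : {set 'I_ni}) (j : 'I_nJ) : option 'I_ni :=
  omap pi [pick k : 'I_ni | rank_cand adj M j (pi k) &&
             [forall k' : 'I_ni, (k' < k)%N ==> ~~ rank_cand adj M j (pi k')]].

Definition rank_step (ni nJ : nat) (adj : 'I_nJ -> 'I_ni -> bool)
    (pi : {perm 'I_ni}) (M : {set 'I_ni}) (j : 'I_nJ) : {set 'I_ni} :=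
  if rank_choice adj pi M j is Some i then i |: M else M.

Definition rank_matched (ni nJ T : nat) (adj : 'I_nJ -> 'I_ni -> bool)
    (s : {ffun 'I_T -> 'I_nJ}) (pi : {perm 'I_ni}) : {set 'I_ni} :=
  foldl (fun M t => rank_step adj pi M (s t)) (finset.set0 : {set 'I_ni}) (enum 'I_T).

Definition rankEZ (R : realType) (ni nJ T : nat) (adj : 'I_nJ -> 'I_ni -> bool)
    (i : 'I_ni) : R :=
  \sum_(s : {ffun 'I_T -> 'I_nJ}) \sum_(pi : {perm 'I_ni})
     seq_prob R nJ T * (#|{perm 'I_ni}|%:R)^-1 *
     (if i \in rank_matched adj s pi then 1 else 0).

Definition rank_obj (R : realType) (ni nJ T : nat) (adj : 'I_nJ -> 'I_ni -> bool) : R :=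
  min_over (rankEZ R T adj).

(* The instance of the theorem, 0-indexed: I = J = 'I_n, type 0 (paper's
   type 1) is adjacent to every offline agent; type j >= 1 is adjacent
   to offline agent j only. *)
Definition inst_adj (n : nat) (j i : 'I_n) : bool := (val j == 0%N) || (i == j).

From HB Require Import structures.
From mathcomp Require Import all_boot all_order all_fingroup all_algebra.
From mathcomp Require Import all_classical all_reals all_analysis.
From mathcomp Require Import ring lra zify.
Import Order.TTheory GRing.Theory Num.Theory.
Local Open Scope ring_scope.
Set Implicit Arguments. Unset Strict Implicit. Unset Printing Implicit Defensive.

(* The clairvoyant policy matching the first arrival of each type [j] to agent
   [j] matches every agent with probability [1 - (1 - 1/n)^n >= 1 - 1/e].

   Agent 0 is matched only by type-0 arrivals, and each type-0 arrival takes the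
   earliest-ranked unmatched agent of the pool formed by agent 0 and the agents
   whose own type never arrives.  Hence if agent 0 is matched, fewer than [A]
   agents of the pool precede it in [pi], where [A] is the number of type-0
   arrivals; by symmetry of the uniform permutation this has probability at most
   [A / |pool|].  About [n/e] types never arrive, and a second-moment bound on
   [|pool|], weighted by [A], gives [E[A / |pool|] <= 6 / (n (1 - 1/n)^n)], which
   is at most [12 e / n]. *)

Lemma card_set_sum_nat (T : finType) (P : pred T) :
  #|[set x | P x]| = (\sum_x (P x : nat))%N.
Proof. by rewrite -sum1dep_card big_mkcond. Qed.

Lemma sumr_indicator_card (R : numDomainType) (T : finType) (P : pred T) :
  \sum_x (P x)%:R = #|[set x | P x]|%:R :> R.
Proof. by rewrite card_set_sum_nat natr_sum. Qed.

Lemma foldl_map (T1 T2 U : Type) (f : U -> T2 -> U) (g : T1 -> T2) z (s : seq T1) :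
  foldl f z (map g s) = foldl (fun u x => f u (g x)) z s.
Proof. by elim: s z => //= x s IH z; rewrite IH. Qed.

Definition rank_pos n (pi : {perm 'I_n}) (x : 'I_n) : nat := (pi^-1)%g x.

Definition ranked_before n (pi : {perm 'I_n}) (S : {set 'I_n}) (x : 'I_n) :=
  [set y in S | (rank_pos pi y < rank_pos pi x)%N].

Lemma rank_pos_inj n (pi : {perm 'I_n}) : injective (rank_pos pi).
Proof. by move=> x y /val_inj /perm_inj. Qed.

Lemma rank_choiceP ni nJ (adj : 'I_nJ -> 'I_ni -> bool) pi M j i :
  rank_choice adj pi M j = Some i ->
  rank_cand adj M j i /\
  (forall k : 'I_ni, (k < rank_pos pi i)%N -> ~~ rank_cand adj M j (pi k)).
Proof.
rewrite /rank_choice; case: pickP => //= k /andP[cand_k /forallP min_k] [<-].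
by split=> // k'; rewrite /rank_pos permK => /(implyP (min_k k')).
Qed.

Section RankingInvariant.
Variables (n : nat) (a0 : 'I_n) (pi : {perm 'I_n}) (S : {set 'I_n}).
Hypothesis val_a0 : val a0 = 0%N.

Definition ranking_inv (M : {set 'I_n}) (c : nat) :=
  (#|M :&: S| <= c)%N /\
  (forall x y, x \in M -> x \in S -> y \in S ->
     (rank_pos pi y < rank_pos pi x)%N -> y \in M).

(* Only type-0 arrivals can match agents of [S]; they do so in rank order. *)
Lemma ranking_inv_step M c j : (j != a0 -> j \notin S) -> ranking_inv M c ->
  ranking_inv (rank_step (@inst_adj n) pi M j) (c + (j == a0))%N.
Proof.
move=> jS [card_MS closed_MS]; rewrite /rank_step.
case choice_j: rank_choice => [i|]; last first.
  by split=> //; rewrite (leq_trans card_MS) ?leq_addr.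
have [/andP[adj_ji iM] min_i] := rank_choiceP choice_j.
have [j_a0 | j_neq] := eqVneq j a0.
- subst j; split.
  + rewrite finset.setIUl cardsU (leq_trans (leq_subr _ _)) // addn1 -add1n.
    by rewrite leq_add // (leq_trans (subset_leq_card (subsetIl _ _))) ?cards1.
  + move=> x y; rewrite in_setU1 => /orP[/eqP-> | xM] xS yS y_before;
      apply/setU1P; right; last exact: closed_MS y_before.
    have := min_i ((pi^-1)%g y) y_before.
    by rewrite permKV /rank_cand /inst_adj val_a0 eqxx negbK.
- have i_j : i = j.
    case/orP: adj_ji => [/eqP j0 | /eqP //].
    by case/eqP: j_neq; apply: val_inj; rewrite /= j0 val_a0.
  have j_notS := jS j_neq; rewrite i_j addn0.
  split.
  + rewrite finset.setIUl cardsU (leq_trans (leq_subr _ _)) //.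
    have -> : [set j] :&: S = finset.set0.
      by apply/setP=> z; rewrite !inE; case: eqP => // ->; rewrite (negbTE j_notS).
    by rewrite cards0.
  + move=> x y; rewrite in_setU1 => /orP[/eqP-> | xM] xS yS y_before.
      by rewrite xS in j_notS.
    by apply/setU1P; right; apply: closed_MS y_before.
Qed.

Lemma ranking_inv_foldl js M c :
  (forall j, j \in js -> j != a0 -> j \notin S) -> ranking_inv M c ->
  ranking_inv (foldl (rank_step (@inst_adj n) pi) M js) (c + count (pred1 a0) js)%N.
Proof.
elim: js M c => [|j js IH] M c js_S inv_M /=; first by rewrite addn0.
rewrite addnA; apply: IH => [k k_js|]; first by apply: js_S; rewrite inE k_js orbT.
by apply: ranking_inv_step => //; apply: js_S; rewrite inE eqxx.
Qed.
End RankingInvariant.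

(* The agents that, for the arrivals [js], only type-0 arrivals can match. *)
Definition pool n (a0 : 'I_n) (js : seq 'I_n) : {set 'I_n} :=
  [set y | (y == a0) || (y \notin js)].

Lemma card_ranked_before_lt_count n (a0 : 'I_n) (pi : {perm 'I_n}) js :
  val a0 = 0%N -> a0 \in foldl (rank_step (@inst_adj n) pi) finset.set0 js ->
  (#|ranked_before pi (pool a0 js) a0| < count (pred1 a0) js)%N.
Proof.
move=> val_a0 a0_matched; set S := pool a0 js.
have a0S : a0 \in S by rewrite inE eqxx.
have [] := @ranking_inv_foldl n a0 pi S val_a0 js finset.set0 0.
- by move=> j j_js j_neq; rewrite inE negb_or j_neq j_js.
- by split=> [|x y]; rewrite ?finset.set0I ?cards0 ?inE.
rewrite add0n => card_MS closed_MS; apply: leq_trans card_MS.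
have a0_new : a0 \notin ranked_before pi S a0 by rewrite inE ltnn andbF.
have := cardsU1 a0 (ranked_before pi S a0); rewrite a0_new add1n => <-.
apply/subset_leq_card/fintype.subsetP => y.
rewrite in_setU1 finset.in_setI => /orP[/eqP-> | ]; first by rewrite a0_matched a0S.
by rewrite inE => /andP[yS y_before]; rewrite yS (closed_MS a0).
Qed.

Section RankSymmetry.
Variables (n : nat) (S : {set 'I_n}) (A : nat).

Definition few_before (pi : {perm 'I_n}) (x : 'I_n) : bool :=
  (#|ranked_before pi S x| < A)%N.

(* The agents of [S] with few predecessors in [S] form an initial segment of [S]. *)
Lemma card_few_before (pi : {perm 'I_n}) : (#|[set x in S | few_before pi x]| <= A)%N.
Proof.
set X := [set x in S | few_before pi x].
have [-> | [x0 x0X]] := set_0Vmem X; first by rewrite cards0.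
have [xm xmX xm_max] := @arg_maxnP _ x0 (mem X) (rank_pos pi) x0X.
have X_sub : X \subset xm |: ranked_before pi S xm.
  apply/fintype.subsetP=> x xX; rewrite in_setU1.
  have [// | x_neq] := eqVneq x xm; have xS : x \in S by case/setIdP: xX.
  rewrite /= inE xS ltn_neqAle (inj_eq (@rank_pos_inj n pi)) x_neq.
  exact: xm_max.
apply: leq_trans (subset_leq_card X_sub) _; rewrite cardsU1.
by case/setIdP: xmX => _; apply: leq_trans; rewrite -add1n leq_add2r leq_b1.
Qed.

Lemma card_perm_few_before_eq x y : x \in S -> y \in S ->
  #|[set pi | few_before pi x]| = #|[set pi | few_before pi y]|.
Proof.
move=> xS yS; set t := tperm y x.
have tS z : (t z \in S) = (z \in S) by rewrite /t; case: tpermP => [->|->|//]; rewrite ?xS ?yS.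
have rank_pos_t pi z : rank_pos (pi * t)%g z = rank_pos pi (t z).
  by rewrite /rank_pos invMg permM tpermV.
have few_t pi : few_before (pi * t)%g y = few_before pi x.
  rewrite /few_before /ranked_before rank_pos_t tpermL -(card_preimset _ (@perm_inj _ t)).
  by congr (_ < A)%N; apply: eq_card => z; rewrite !inE tS rank_pos_t tpermK.
rewrite -[RHS](card_preimset _ (mulIg t)).
by apply: eq_card => pi; rewrite !inE few_t.
Qed.

Lemma card_perm_few_before a0 : a0 \in S ->
  (#|S| * #|[set pi : {perm 'I_n} | few_before pi a0]| <= n`! * A)%N.
Proof.
move=> a0S.
have -> : (#|S| * #|[set pi | few_before pi a0]| =
           \sum_(x in S) #|[set pi | few_before pi x]|)%N.
  by rewrite -sum_nat_const; apply: eq_bigr => x xS; rewrite (card_perm_few_before_eq xS a0S).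
rewrite (eq_bigr (fun x => \sum_(pi : {perm 'I_n}) (few_before pi x : nat))%N);
  last by move=> x _; rewrite card_set_sum_nat.
rewrite exchange_big -card_Sn -sum_nat_const /=; apply: leq_sum => pi _.
rewrite (leq_trans _ (card_few_before pi)) // card_set_sum_nat big_mkcond /=.
by apply: eq_leq; apply: eq_bigr => x _; case: (x \in S).
Qed.
End RankSymmetry.

Lemma card_ffun_hit_avoid (aT rT : finType) (t : aT) (a0 : rT) (D : {set rT}) :
  a0 \notin D ->
  #|[set s : {ffun aT -> rT} | (s t == a0) && [forall t', s t' \notin D]]| =
  ((#|rT| - #|D|) ^ #|aT|.-1)%N.
Proof.
move=> a0D.
pose F x := if x == t then pred1 a0 else [pred y | y \notin D].
have -> : #|[set s : {ffun aT -> rT} | (s t == a0) && [forall t', s t' \notin D]]| =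
          #|family F|.
  apply: eq_card => s; rewrite inE; apply/andP/familyP.
    move=> [/eqP st /fintype.forallP sD] x.
    by rewrite /F; case: eqP => [->|_]; rewrite inE ?st.
  move=> sF; split; first by have := sF t; rewrite /F eqxx inE.
  apply/fintype.forallP => x; have := sF x; rewrite /F.
  by case: eqP => [->|_]; rewrite inE // => /eqP->.
rewrite card_family foldrE big_map big_enum (bigD1 t) //= {1}/F eqxx card1 mul1n.
rewrite (eq_bigr (fun _ => #|rT| - #|D|)%N) ?prod_nat_const ?cardC1 // => x /negbTE x_t.
by rewrite /F x_t -(cardC D) addKn; apply: eq_card => y; rewrite !inE.
Qed.

Section ArrivalMoments.
Variables (R : realFieldType) (n : nat) (a0 t : 'I_n).

Definition missing (s : {ffun 'I_n -> 'I_n}) (i : 'I_n) : bool := [forall t', s t' != i].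

Definition nmissing (s : {ffun 'I_n -> 'I_n}) : R := \sum_(i | i != a0) (missing s i)%:R.

Definition hit (s : {ffun 'I_n -> 'I_n}) : R := (s t == a0)%:R.

Lemma sum_hit_avoid (D : {set 'I_n}) : a0 \notin D ->
  \sum_(s : {ffun 'I_n -> 'I_n}) ((s t == a0) && [forall t', s t' \notin D])%:R =
  ((n - #|D|) ^ n.-1)%:R :> R.
Proof. by move=> a0D; rewrite sumr_indicator_card card_ffun_hit_avoid // !card_ord. Qed.

Lemma missing2E s i j : missing s i && missing s j = [forall t', s t' \notin [set i; j]].
Proof.
apply/andP/fintype.forallP => [[/fintype.forallP si /fintype.forallP sj] x | sij].
  by rewrite !inE negb_or si sj.
by split; apply/fintype.forallP => x; have := sij x; rewrite !inE negb_or => /andP[].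
Qed.

Lemma card_other_agents : #|[pred i : 'I_n | i != a0]| = n.-1.
Proof. by have := cardC1 a0; rewrite card_ord => <-; apply: eq_card => i; rewrite !inE. Qed.

Lemma sum_hit : \sum_s hit s = (n ^ n.-1)%:R.
Proof.
transitivity (\sum_(s : {ffun 'I_n -> 'I_n})
               ((s t == a0) && [forall t', s t' \notin (finset.set0 : {set 'I_n})])%:R : R).
  apply: eq_bigr => s _; suff -> : [forall t', s t' \notin (finset.set0 : {set 'I_n})].
    by rewrite andbT.
  by apply/fintype.forallP => x; rewrite inE.
by rewrite sum_hit_avoid ?inE // cards0 subn0.
Qed.

Lemma sum_hit_nmissing : \sum_s hit s * nmissing s = (n.-1 * n.-1 ^ n.-1)%:R.
Proof.
transitivity (\sum_(i | i != a0) \sum_(s : {ffun 'I_n -> 'I_n})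
               ((s t == a0) && [forall t', s t' \notin [set i]])%:R : R).
  rewrite exchange_big; apply: eq_bigr => s _; rewrite /nmissing mulr_sumr.
  apply: eq_bigr => i _; rewrite /hit -natrM mulnb.
  by rewrite -[missing s i]andbb missing2E finset.setUid.
rewrite (eq_bigr (fun _ => (n.-1 ^ n.-1)%:R)); last first.
  by move=> i i_a0; rewrite sum_hit_avoid ?inE 1?eq_sym // cards1 subn1.
by rewrite sumr_const card_other_agents natrM mulrC mulr_natr.
Qed.

Lemma sum_nmissing2_avoid i : i != a0 ->
  \sum_(j | j != a0) ((n - #|[set i; j]|) ^ n.-1)%:R =
  (n.-1 ^ n.-1 + (n - 2) * (n - 2) ^ n.-1)%:R :> R.
Proof.
move=> i_a0; rewrite (bigD1 i) //= finset.setUid cards1 subn1 natrD; congr (_ + _).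
rewrite (eq_bigr (fun _ => ((n - 2) ^ n.-1)%:R)); last first.
  by move=> j /andP[_ j_i]; rewrite cards2 eq_sym j_i.
have card_neq2 : #|[pred j : 'I_n | (j != a0) && (j != i)]| = (n - 2)%N.
  have := cardC [set a0; i]; rewrite card_ord cards2 eq_sym i_a0 => card_n.
  rewrite -[X in (X - _)%N]card_n addKn.
  by apply: eq_card => j; rewrite !inE negb_or.
by rewrite sumr_const card_neq2 natrM mulrC mulr_natr.
Qed.

Lemma sum_hit_nmissing_sqr :
  \sum_s hit s * nmissing s ^+ 2 = (n.-1 * (n.-1 ^ n.-1 + (n - 2) * (n - 2) ^ n.-1))%:R.
Proof.
transitivity (\sum_(s : {ffun 'I_n -> 'I_n}) \sum_(i | i != a0) \sum_(j | j != a0)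
    ((s t == a0) && [forall t', s t' \notin [set i; j]])%:R : R).
  apply: eq_bigr => s _; rewrite /nmissing expr2 mulr_suml mulr_sumr.
  apply: eq_bigr => i _; rewrite !mulr_sumr; apply: eq_bigr => j _.
  by rewrite /hit mulrA -!natrM !mulnb -andbA missing2E.
rewrite exchange_big; under eq_bigr => i _ do rewrite exchange_big.
rewrite (eq_bigr (fun _ => (n.-1 ^ n.-1 + (n - 2) * (n - 2) ^ n.-1)%:R)); last first.
  move=> i i_a0; rewrite -(sum_nmissing2_avoid i_a0); apply: eq_bigr => j j_a0.
  by rewrite sum_hit_avoid // !inE negb_or !(eq_sym a0) i_a0 j_a0.
by rewrite sumr_const card_other_agents natrM mulrC mulr_natr.
Qed.

(* Conditionally on [s t = a0], the expected number of missing agents. *)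
Definition mean_missing : R := (n.-1 ^ n)%:R / (n ^ n.-1)%:R.

Lemma sum_hit_dev2 : (0 < n)%N ->
  \sum_s hit s * (nmissing s - mean_missing) ^+ 2 <= (n.-1 ^ n)%:R.
Proof.
move=> n_gt0.
have -> : \sum_s hit s * (nmissing s - mean_missing) ^+ 2 =
    \sum_s hit s * nmissing s ^+ 2 - 2 * mean_missing * \sum_s hit s * nmissing s +
    mean_missing ^+ 2 * \sum_s hit s.
  by rewrite !mulr_sumr -sumrB -big_split /=; apply: eq_bigr => s _; ring.
rewrite sum_hit_nmissing_sqr sum_hit_nmissing sum_hit /mean_missing.
case: n n_gt0 a0 t => [//|m] _ _ _ /=.
have K_gt0 : 0 < (m.+1 ^ m)%:R :> R by rewrite ltr0n expn_gt0.
rewrite subSS subn1 -subn1 mulnDr natrD -![(m * m ^ m)%N]expnS.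
set M := (m ^ m.+1)%:R : R; set K := (m.+1 ^ m)%:R : R.
set Z := (m * ((m - 1) * (m - 1) ^ m))%:R : R.
have ZK_le : Z * K <= M * M.
  rewrite /Z /K /M -!natrM ler_nat.
  have -> : (m * ((m - 1) * (m - 1) ^ m) * m.+1 ^ m =
             m * (m - 1) * ((m - 1) * m.+1) ^ m)%N by rewrite expnMn; ring.
  have -> : (m ^ m.+1 * m ^ m.+1 = m * m * (m * m) ^ m)%N by rewrite expnMn !expnS; ring.
  apply: leq_mul; first nia.
  by case: (m) => // k; rewrite leq_exp2r //; nia.
have -> : M + Z - 2 * (M / K) * M + (M / K) ^+ 2 * K = M + Z - M * M / K.
  by field; rewrite gt_eqF.
have : Z <= M * M / K by rewrite ler_pdivlMr.
lra.
Qed.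
End ArrivalMoments.

(* Either [h - 1 >= mu / 2], or the deviation term is at least [1]. *)
Lemma invr_le_dev2 (R : realFieldType) (mu h : R) : 0 < mu -> 1 <= h ->
  h^-1 <= 2 / mu + 4 * (h - 1 - mu) ^+ 2 / mu ^+ 2.
Proof.
move=> mu_gt0 h_ge1.
have mu2_gt0 : 0 < mu ^+ 2 by rewrite exprn_gt0.
have dev_ge0 : 0 <= 4 * (h - 1 - mu) ^+ 2 / mu ^+ 2.
  by apply: divr_ge0; [rewrite mulr_ge0 ?sqr_ge0 | exact: ltW].
have mean_ge0 : 0 <= 2 / mu by rewrite divr_ge0 ?ltW.
have [far | near] := lerP (mu / 2) (h - 1).
  have : h^-1 <= 2 / mu by rewrite -invf_div lef_pV2 ?posrE ?divr_gt0 //; lra.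
  lra.
have : h^-1 <= 1 by rewrite invf_le1 //; lra.
have : 1 <= 4 * (h - 1 - mu) ^+ 2 / mu ^+ 2.
  by rewrite ler_pdivlMr // mul1r !expr2; nra.
lra.
Qed.

(* The probability that a given type is absent from [m.+1] uniform arrivals. *)
Definition miss_prob (R : realFieldType) (m : nat) : R := (m%:R / m.+1%:R) ^+ m.+1.

Lemma miss_prob_gt0 (R : realFieldType) m : (0 < m)%N -> 0 < miss_prob R m.
Proof. by move=> m_gt0; rewrite exprn_gt0 // divr_gt0 ?ltr0n. Qed.

Lemma miss_prob_le_expN1 (R : realType) m : miss_prob R m <= expR (-1).
Proof.
have n_gt0 : 0 < m.+1%:R :> R by rewrite ltr0n.
rewrite /miss_prob; have -> : m%:R / m.+1%:R = 1 + - m.+1%:R^-1 :> R.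
  by rewrite -natr1; field; rewrite natr1 gt_eqF.
have -> : expR (-1) = expR (- m.+1%:R^-1) ^+ m.+1 :> R.
  by rewrite -expRM_natr mulNr mulVf ?gt_eqF.
apply: lerXn2r; rewrite ?nnegrE ?expR_ge0 ?expR_ge1Dx //.
by rewrite subr_ge0 invf_le1 // ler1n.
Qed.

Lemma miss_prob_ge (R : realType) m : (0 < m)%N -> expR (-1) / 2 <= miss_prob R m.
Proof.
move=> m_gt0; have mR_gt0 : 0 < m%:R :> R by rewrite ltr0n.
have n_gt0 : 0 < m.+1%:R :> R by rewrite ltr0n.
rewrite /miss_prob exprS; set a := m%:R / m.+1%:R.
have a_ge0 : 0 <= a by rewrite divr_ge0 ?ltW.
have a_ge_half : 1 / 2 <= a.
  rewrite ler_pdivlMr // -[m.+1%:R]natr1.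
  have : 1 <= m%:R :> R by rewrite ler1n.
  lra.
have aXm_ge : expR (-1) <= a ^+ m.
  have inv_aXm_le : (m.+1%:R / m%:R) ^+ m <= expR 1 :> R.
    have -> : m.+1%:R / m%:R = 1 + m%:R^-1 :> R.
      by rewrite -[m.+1%:R]natr1; field; rewrite gt_eqF.
    have -> : expR 1 = expR (m%:R^-1) ^+ m :> R by rewrite -expRM_natr mulVf ?gt_eqF.
    by apply: lerXn2r; rewrite ?nnegrE ?expR_ge0 ?expR_ge1Dx.
  rewrite /a -invf_div exprVn expRN lef_pV2 ?posrE ?expR_gt0 ?exprn_gt0 ?divr_gt0 //.
have e_ge0 : 0 <= expR (-1) :> R by rewrite expR_ge0.
have : 0 <= (a - 1 / 2) * expR (-1) by rewrite mulr_ge0 // subr_ge0.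
have : 0 <= a * (a ^+ m - expR (-1)) by rewrite mulr_ge0 // subr_ge0.
lra.
Qed.

Section RankingExpectation.
Variables (R : realType) (m : nat) (a0 : 'I_m.+1).
Let n := m.+1.
Let P := seq_prob R n n.

Definition ntype0 (s : {ffun 'I_n -> 'I_n}) : R := \sum_t hit R a0 t s.

Lemma seq_prob_gt0 : 0 < P.
Proof. by rewrite exprn_gt0 // invr_gt0 ltr0n. Qed.

Lemma seq_prob_mul_pow k : P * (k ^ n)%:R = (k%:R / n%:R) ^+ n.
Proof. by rewrite natrX -exprMn mulrC. Qed.

Lemma seq_prob_mul_card : P * (n ^ n)%:R = 1.
Proof. by rewrite seq_prob_mul_pow divff ?expr1n ?pnatr_eq0. Qed.

Lemma mean_missingE : mean_missing R n = n%:R * miss_prob R m.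
Proof.
rewrite /mean_missing /miss_prob /n /= !natrX !exprS exprMn exprVn.
by field; rewrite expf_neq0 ?pnatr_eq0 //= addrC natr1 pnatr_eq0.
Qed.

Lemma sum_ntype0 : \sum_s P * ntype0 s = 1.
Proof.
rewrite -mulr_sumr /ntype0 exchange_big /=.
rewrite (eq_bigr (fun _ => (n ^ n.-1)%:R)) => [|t _]; last exact: sum_hit.
by rewrite sumr_const card_ord -mulrnA -expnSr seq_prob_mul_card.
Qed.

Lemma sum_ntype0_dev2 :
  \sum_s P * ntype0 s * (nmissing R a0 s - mean_missing R n) ^+ 2 <= n%:R * miss_prob R m.
Proof.
under eq_bigr => s _ do rewrite /ntype0 -mulrA mulr_suml.
rewrite -mulr_sumr exchange_big /= /miss_prob -(seq_prob_mul_pow m) mulrCA.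
apply: ler_wpM2l; first exact: ltW seq_prob_gt0.
rewrite mulr_natl -[n in _ *+ n]card_ord -sumr_const.
by apply: ler_sum => t _; apply: sum_hit_dev2.
Qed.

Lemma expect_ntype0_div_pool : (0 < m)%N ->
  \sum_s P * (ntype0 s / (1 + nmissing R a0 s)) <= 6 / (n%:R * miss_prob R m).
Proof.
move=> m_gt0; set mu := mean_missing R n.
have q_gt0 := miss_prob_gt0 R m_gt0.
have mu_gt0 : 0 < mu by rewrite /mu mean_missingE mulr_gt0 ?ltr0n.
apply: (@le_trans _ _ (\sum_s (P * ntype0 s * (2 / mu) +
         P * ntype0 s * (nmissing R a0 s - mu) ^+ 2 * (4 / mu ^+ 2)))).
  apply: ler_sum => s _.
  have pool_ge1 : 1 <= 1 + nmissing R a0 s by rewrite lerDl sumr_ge0.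
  have inv_le := invr_le_dev2 mu_gt0 pool_ge1; rewrite [1 + _ - 1]addrC addKr in inv_le.
  have ntype0_ge0 : 0 <= ntype0 s by rewrite sumr_ge0.
  rewrite mulrA; apply: le_trans (ler_wpM2l (mulr_ge0 (ltW seq_prob_gt0) ntype0_ge0) inv_le) _.
  by rewrite le_eqVlt; apply/orP; left; apply/eqP; ring.
rewrite big_split /= -!mulr_suml sum_ntype0 mul1r.
apply: (@le_trans _ _ (2 / mu + n%:R * miss_prob R m * (4 / mu ^+ 2))).
  by rewrite lerD2l ler_wpM2r ?sum_ntype0_dev2 // divr_ge0 ?exprn_ge0 ?ltW.
rewrite /mu mean_missingE le_eqVlt; apply/orP; left; apply/eqP; field.
by rewrite pnatr_eq0 gt_eqF.
Qed.

Lemma count_type0E (s : {ffun 'I_n -> 'I_n}) :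
  (count (pred1 a0) (map s (enum 'I_n)))%:R = ntype0 s.
Proof. by rewrite -sumn_count sumnE !big_map natr_sum. Qed.

Lemma card_poolE (s : {ffun 'I_n -> 'I_n}) :
  #|pool a0 (map s (enum 'I_n))|%:R = 1 + nmissing R a0 s.
Proof.
rewrite -sumr_indicator_card (bigD1 a0) //= eqxx; congr (_ + _).
apply: eq_bigr => y /negbTE y_a0; rewrite y_a0 /=; congr (nat_of_bool _)%:R.
apply/idP/idP => [y_notin | /fintype.forallP y_miss]; first apply/fintype.forallP => t.
  by apply: contra y_notin => /eqP <-; apply: map_f; rewrite mem_enum.
by apply/mapP => -[t _ y_st]; have := y_miss t; rewrite y_st eqxx.
Qed.

Lemma rankEZ_le_expect : val a0 = 0%N ->
  rankEZ R n (@inst_adj n) a0 <= \sum_s P * (ntype0 s / (1 + nmissing R a0 s)).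
Proof.
move=> val_a0; rewrite /rankEZ; apply: ler_sum => s _.
set js := map s (enum 'I_n); set S := pool a0 js; set A := count (pred1 a0) js.
have perms_gt0 : 0 < #|{perm 'I_n}|%:R :> R by rewrite ltr0n card_Sn fact_gt0.
rewrite -mulr_sumr -/P.
apply: (@le_trans _ _ (P * #|{perm 'I_n}|%:R^-1 * #|[set pi | few_before S A pi a0]|%:R)).
  apply: ler_wpM2l; first by rewrite mulr_ge0 ?invr_ge0 ?ltW ?seq_prob_gt0.
  rewrite -sumr_indicator_card; apply: ler_sum => pi _.
  case: ifP => a0_matched; last by case: few_before.
  rewrite /few_before card_ranked_before_lt_count //.
  by move: a0_matched; rewrite /rank_matched -foldl_map.
rewrite -mulrA; apply: ler_wpM2l; first exact: ltW seq_prob_gt0.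
rewrite -card_poolE -count_type0E -/js -/S -/A.
have S_gt0 : 0 < #|S|%:R :> R by rewrite ltr0n; apply/card_gt0P; exists a0; rewrite inE eqxx.
rewrite ler_pdivlMr // -mulrA mulrC ler_pdivrMr // -!natrM ler_nat card_Sn mulnC.
by rewrite [(A * _)%N]mulnC card_perm_few_before // inE eqxx.
Qed.
End RankingExpectation.

Section FirstArrivalPolicy.
Variables (R : realType) (m : nat).
Let n := m.+1.

Definition first_arrival_match (s : {ffun 'I_n -> 'I_n}) : {ffun 'I_n -> option 'I_n} :=
  [ffun t : 'I_n => if [forall t' : 'I_n, (t' < t)%N ==> (s t' != s t)] then Some (s t) else None].

Definition first_arrival_policy (s : {ffun 'I_n -> 'I_n}) (M : {ffun 'I_n -> option 'I_n}) : R :=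
  (M == first_arrival_match s)%:R.

Lemma first_arrival_matchP s t i : first_arrival_match s t = Some i ->
  i = s t /\ forall t' : 'I_n, (t' < t)%N -> s t' != s t.
Proof.
rewrite ffunE; case: ifP => // /fintype.forallP first_t [<-].
by split=> // t'; apply/implyP.
Qed.

Lemma first_arrival_policyP : clair_policy (@inst_adj n) first_arrival_policy.
Proof.
move=> s; split=> [M | ]; first exact: ler0n.
split=> [|M].
  rewrite (bigD1 (first_arrival_match s)) //= /first_arrival_policy eqxx.
  by rewrite big1 ?addr0 // => M /negbTE->.
rewrite /first_arrival_policy pnatr_eq0 eqb0 negbK => /eqP->.
split=> [t i /first_arrival_matchP[-> _] | ]; first by rewrite /inst_adj eqxx orbT.
move=> t t' i /first_arrival_matchP[-> first_t] /first_arrival_matchP[st' first_t'].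
apply: val_inj; case: (ltngtP t t') => // [t_t' | t'_t].
  by have := first_t' t t_t'; rewrite st' eqxx.
by have := first_t t' t'_t; rewrite st' eqxx.
Qed.

Lemma matchedZ_first_arrival s i :
  matchedZ R (first_arrival_match s) i = (~~ missing s i)%:R.
Proof.
rewrite /matchedZ; suff -> : [exists t, first_arrival_match s t == Some i] = ~~ missing s i.
  by case: (~~ _).
apply/existsP/idP => [[t /eqP] | ].
  by case/first_arrival_matchP => -> _; apply/fintype.forallP => /(_ t); rewrite eqxx.
rewrite negb_forall => /existsP[t1]; rewrite negbK => s_t1.
have [t0 /eqP s_t0 t0_min] := @arg_minnP _ t1 (fun t => s t == i) (@nat_of_ord n) s_t1.
exists t0; rewrite ffunE -s_t0.
suff -> : [forall t' : 'I_n, (t' < t0)%N ==> (s t' != s t0)] by [].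
apply/fintype.forallP => t'; apply/implyP; apply: contraTneq => s_t'.
by rewrite -leqNgt t0_min // s_t' s_t0.
Qed.

Lemma card_missing i : #|[set s : {ffun 'I_n -> 'I_n} | missing s i]| = (m ^ n)%N.
Proof.
have -> : #|[set s : {ffun 'I_n -> 'I_n} | missing s i]| = #|ffun_on_mem 'I_n (mem (predC1 i))|.
  apply: eq_card => s; rewrite inE.
  by apply/fintype.forallP/ffun_onP => miss x; have := miss x; rewrite !inE.
by rewrite card_ffun_on cardC1 !card_ord.
Qed.

Lemma clairEZ_first_arrival i : clairEZ first_arrival_policy i = 1 - miss_prob R m.
Proof.
rewrite /clairEZ (eq_bigr (fun s => seq_prob R n n * (1 - (missing s i)%:R))); last first.
  move=> s _; rewrite (bigD1 (first_arrival_match s)) //= /first_arrival_policy eqxx mul1r.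
  rewrite matchedZ_first_arrival big1 ?addr0 => [|M /negbTE->]; last by rewrite mul0r.
  by case: missing; rewrite ?subrr ?subr0.
rewrite -mulr_sumr sumrB sumr_const sumr_indicator_card card_missing card_ffun !card_ord.
by rewrite mulrBr seq_prob_mul_card seq_prob_mul_pow.
Qed.

Lemma clair_opt_ge : 1 - expR (-1) <= clair_opt R n (@inst_adj n).
Proof.
apply: (@le_trans _ _ (min_over (clairEZ first_arrival_policy))).
  apply: le_bigmin => [|i _]; first by rewrite lerBlDr lerDl expR_ge0.
  by rewrite clairEZ_first_arrival lerB // miss_prob_le_expN1.
apply: ub_le_sup; first by exists 1 => x [pol [_ ->]]; exact: bigmin_le_id.
by exists first_arrival_policy; split=> //; exact: first_arrival_policyP.
Qed.
End FirstArrivalPolicy.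

Lemma rankEZ_agent0_le (R : realType) m (a0 : 'I_m.+1) : (0 < m)%N -> val a0 = 0%N ->
  rankEZ R m.+1 (@inst_adj m.+1) a0 <= (12 / expR (-1)) / m.+1%:R.
Proof.
move=> m_gt0 val_a0; apply: le_trans (rankEZ_le_expect R val_a0) _.
apply: le_trans (expect_ntype0_div_pool R a0 m_gt0) _.
have q_gt0 := miss_prob_gt0 R m_gt0.
have inv_q_le : (miss_prob R m)^-1 <= 2 / expR (-1).
  by rewrite -invf_div lef_pV2 ?posrE ?divr_gt0 ?miss_prob_ge.
have -> : 12 / expR (-1) / m.+1%:R = 6 / m.+1%:R * (2 / expR (-1)) :> R by ring.
by rewrite invfM [6 * _]mulrA; apply: ler_wpM2l inv_q_le; rewrite divr_ge0.
Qed.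

Theorem mainTheorem4 (R : realType) :
  (forall n : nat, (2 <= n)%N ->
     1 - expR (-1) <= clair_opt R n (@inst_adj n))
  /\
  (exists C : R, exists N : nat, forall n : nat, (2 <= n)%N -> (N <= n)%N ->
     forall i1 : 'I_n, val i1 = 0%N ->
       rankEZ R n (@inst_adj n) i1 <= C / n%:R)
  /\
  (forall eps : R, 0 < eps ->
     exists (ni nJ : nat) (adj : 'I_nJ -> 'I_ni -> bool),
       rank_obj R nJ adj < eps * clair_opt R nJ adj).
Proof.
set C : R := 12 / expR (-1).
have C_ge0 : 0 <= C by rewrite divr_ge0 ?expR_ge0.
have opt_gt0 : 0 < 1 - expR (-1) :> R by rewrite subr_gt0 expR_lt1 ltrN10.
split; first by case=> // m _; apply: clair_opt_ge.
split; first by exists C, 0%N => -[|m] // m_gt0 _ i1; exact: rankEZ_agent0_le.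
move=> eps eps_gt0; have eps_opt_gt0 : 0 < eps * (1 - expR (-1)) by rewrite mulr_gt0.
pose k := Num.Def.archi_bound (C / (eps * (1 - expR (-1)))).
have k_large : C < k.+2%:R * (eps * (1 - expR (-1))).
  rewrite -ltr_pdivrMr //; apply: lt_le_trans (archi_boundP _) _; first by rewrite divr_ge0 // ltW.
  by rewrite ler_nat -addn2 leq_addr.
exists k.+2, k.+2, (@inst_adj k.+2).
apply: (@le_lt_trans _ _ (C / k.+2%:R)).
  by apply: le_trans (@rankEZ_agent0_le R k.+1 ord0 (ltn0Sn k) erefl); apply: bigmin_le.
apply: lt_le_trans (ler_wpM2l (ltW eps_gt0) (clair_opt_ge R k.+1)).
by rewrite ltr_pdivrMr ?ltr0n // mulrC.
Qed.
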